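(* Let $k\in\mathbb{N}$, let $P$ be the uniform distribution on $[0,1]$ and let $\beta=\{\frac jk:1\leq j\leq k\}$. Then the conditional optimal set of $k$-points for $P$ with respect to $\beta$ is $\beta$ itself, and the $k$th conditional quantization error is $V_k=\frac{k+3}{12k^3}$.
   Context: For a Borel probability measure $P$ on $\mathbb{R}$ and finite $\beta\subset\mathbb{R}$ with $\mathrm{card}(\beta)=r$, for $n\geq r$, $V_n=\inf\{\int\min_{a\in\alpha\cup\beta}(x-a)^2dP(x):\mathrm{card}(\alpha)\leq n-r\}$; a set $\alpha\cup\beta$ attaining the infimum (with each point of $\beta$ having a Voronoi region of positive $P$-measure) is a conditional optimal set of $n$-points with respect to $\beta$. *)

From HB Require Import structures.
From mathcomp Require Import all_boot all_order all_algebra finmap.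
From mathcomp Require Import all_classical all_reals all_analysis.
Set Implicit Arguments. Unset Strict Implicit. Unset Printing Implicit Defensive.
Import Order.TTheory GRing.Theory Num.Theory.
Local Open Scope classical_set_scope.
Local Open Scope fset_scope.
Local Open Scope ring_scope.

Section CondQuant.
Variable R : realType.

Definition mindist2 (A : {fset R}) (x : R) : \bar R :=
  \big[Order.min/+oo%E]_(a <- A) ((x - a) ^+ 2)%:E.

Definition distortion (P : probability (measurableTypeR R) R) (A : {fset R}) : \bar R :=
  (\int[P]_x mindist2 A x)%E.

Definition cond_quant_error (P : probability (measurableTypeR R) R) (beta : {fset R})
  (n : nat) : \bar R :=
  ereal_inf [set distortion P (alpha `|` beta) |
             alpha in [set alpha : {fset R} | (#|` alpha| <= n - #|` beta|)%N]].

Definition voronoi (A : {fset R}) (a : R) : set (measurableTypeR R) :=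
  [set x | forall b, b \in A -> `|x - a| <= `|x - b|].

Definition cond_optimal_set (P : probability (measurableTypeR R) R) (beta : {fset R})
  (n : nat) (gamma : {fset R}) : Prop :=
  (#|` beta| <= n)%N /\
  exists alpha : {fset R},
    [/\ (#|` alpha| <= n - #|` beta|)%N,
        gamma = alpha `|` beta,
        distortion P gamma = cond_quant_error P beta n &
        forall b, b \in beta -> (0 < P (voronoi gamma b))%E].

End CondQuant.

Definition beta_k (R : realType) (k : nat) : {fset R} :=
  [fset (j%:R / k%:R : R) | j in iota 1 k].

Definition unif01 (R : realType) : probability (measurableTypeR R) R := uniform_prob (@ltr01 R).
Arguments unif01 : clear implicits.
Arguments beta_k : clear implicits.

From mathcomp Require Import all_boot all_order all_algebra finmap.
From mathcomp Require Import all_classical all_reals all_analysis.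
From mathcomp Require Import measurable_realfun.
From mathcomp Require Import ring lra zify.
Import Order.TTheory GRing.Theory Num.Theory numFieldNormedType.Exports.
Local Open Scope classical_set_scope.
Local Open Scope fset_scope.
Local Open Scope ring_scope.

(* Since card(beta) = k, the only admissible alpha is empty: the conditional
   quantization error is the distortion of beta itself, and beta is the
   conditional optimal set as soon as its Voronoi cells have positive mass.
   Within [0, 1] the cell of j/k is [(2j-1)/(2k), (2j+1)/(2k)], truncated at 0
   and 1, and on it the integrand is (x - j/k)^2.  Splitting [0, 1] at the
   midpoints (2m+1)/(2k), the piece [0, 1/(2k)] contributes 7/(24k^3), each of
   the k-1 full cells 1/(12k^3) and the last half cell 1/(24k^3), for a total of
   (k+3)/(12k^3). *)

Lemma ler_dist_bisector (R : realDomainType) (a b y : R) :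
  0 <= (b - a) * (2 * y - a - b) -> `|y - b| <= `|y - a|.
Proof.
by move=> h; rewrite -ler_sqr ?nnegrE // !real_normK ?num_real //; nra.
Qed.

Section nearest_point.
Variables (R : realType) (A : {fset R}).

Lemma mindist2_ge0 x : (0 <= mindist2 A x)%E.
Proof. by apply: le_bigmin => [|b _]; rewrite ?leey // lee_fin sqr_ge0. Qed.

Lemma measurable_mindist2 : measurable_fun setT (mindist2 A).
Proof.
rewrite /mindist2; elim: (A : seq R) => [|a s IH].
  by under eq_fun do rewrite big_nil; exact: measurable_cst.
under eq_fun do rewrite big_cons.
apply: measurable_mine => //; apply/measurable_EFinP.
by apply: measurable_funX; exact: measurable_funB.
Qed.

Lemma mindist2_voronoi c x : c \in A -> voronoi A c x ->
  mindist2 A x = ((x - c) ^+ 2)%:E.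
Proof.
move=> cA xc; rewrite /mindist2 big_seq; apply: le_anti.
rewrite ge_bigmin_seq //=.
apply: le_bigmin => [|b bA]; rewrite ?leey // lee_fin.
rewrite -(real_normK (num_real (x - c))) -(real_normK (num_real (x - b))).
by rewrite ler_sqr ?nnegrE // xc.
Qed.

Lemma measurable_voronoi c : measurable (voronoi A c).
Proof.
rewrite (_ : voronoi A c = \bigcap_(b in [set` A]) [set x | `|x - c| <= `|x - b|]) //.
apply: fin_bigcap_measurable => [|b _]; first exact: finite_fset.
have mle : measurable_fun setT (fun x : R => `|x - c| <= `|x - b|).
  by apply: measurable_fun_ler; apply: measurableT_comp => //; exact: measurable_funB.
by rewrite -[X in measurable X]setTI; exact: mle.
Qed.
End nearest_point.

Section conditional_quantization.
Variables (R : realType) (P : probability (measurableTypeR R) R) (beta : {fset R}).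

Let fset_card0 (alpha : {fset R}) : (#|` alpha| <= 0)%N -> alpha = fset0.
Proof. by rewrite leqn0 cardfs_eq0 => /eqP. Qed.

Lemma cond_quant_error_card : cond_quant_error P beta #|` beta| = distortion P beta.
Proof.
rewrite /cond_quant_error subnn -[RHS]ereal_inf1; congr ereal_inf.
apply/seteqP; split => y /=.
  by move=> [alpha /fset_card0 -> <-]; rewrite fset0U.
by move=> ->; exists fset0; rewrite ?cardfs0 ?fset0U.
Qed.

Lemma cond_optimal_set_card gamma :
  cond_optimal_set P beta #|` beta| gamma <->
  gamma = beta /\ forall b, b \in beta -> (0 < P (voronoi beta b))%E.
Proof.
split.
  case=> _ [alpha [card_alpha -> _ vor_gt0]].
  move: card_alpha vor_gt0; rewrite subnn => /fset_card0 ->.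
  by rewrite fset0U.
move=> [-> vor_gt0]; split => //; exists fset0.
by rewrite cardfs0 fset0U cond_quant_error_card.
Qed.

End conditional_quantization.

Section interval_integrals.
Variable R : realType.
Local Notation mu := (@lebesgue_measure R).

Let continuous_derivable (f : R -> R) : (forall x, derivable f x 1) -> continuous f.
Proof. by move=> df x; apply/differentiable_continuous/derivable1_diffP. Qed.

Lemma integral_itv_sqr (a b p : R) : a <= b ->
  (\int[mu]_(x in `[a, b]) ((x - p) ^+ 2)%:E =
   (((b - p) ^+ 3 - (a - p) ^+ 3) / 3)%:E)%E.
Proof.
rewrite le_eqVlt => /predU1P[<-|ab].
  by rewrite set_itv1 integral_set1 subrr mul0r.
pose F y := (y - p) ^+ 3 / 3.
have dF (x : R) : is_derive x (1 : R) F ((x - p) ^+ 2).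
  by apply: is_derive_eq; rewrite /GRing.scale /=; field.
have cF : continuous F by apply: continuous_derivable => x; exact: ex_derive.
rewrite (@continuous_FTC2 _ _ F) //; first by rewrite -EFinB mulrBl.
- by apply: continuous_subspaceT; apply: continuous_derivable => x; exact: ex_derive.
- split; first by move=> x _; exact: ex_derive.
  + exact/cvg_at_right_filter/cF.
  + exact/cvg_at_left_filter/cF.
- by move=> x _; rewrite derive1E; exact: derive_val.
Qed.

Lemma integral_itv_split (f : R -> \bar R) (a b c : R) : a <= b -> b <= c ->
  measurable_fun `[a, c] f ->
  (\int[mu]_(x in `[a, c]) f x =
   \int[mu]_(x in `[a, b]) f x + \int[mu]_(x in `[b, c]) f x)%E.
Proof.
move=> ab bc mf.
rewrite (@itv_bndbnd_setU _ _ _ (BRight b)) ?bnd_simp // in mf *.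
rewrite integral_setU //; last first.
  rewrite disj_set2E; apply/eqP/seteqP; split => x //= [].
  by rewrite !in_itv /= => /andP[_ xb] /andP[bx _]; have := lt_le_trans bx xb; rewrite ltxx.
rewrite integral_itv_obnd_cbnd //.
by apply: measurable_funS mf => //; exact: measurableU.
Qed.

Lemma integral_mindist2_voronoi (A : {fset R}) (c a b : R) :
  c \in A -> a <= b -> (`[a, b] `<=` voronoi A c)%classic ->
  (\int[mu]_(x in `[a, b]) mindist2 A x = (((b - c) ^+ 3 - (a - c) ^+ 3) / 3)%:E)%E.
Proof.
move=> cA ab sub; rewrite -integral_itv_sqr //; apply: eq_integral => x /[!inE] xab.
exact: mindist2_voronoi (sub _ xab).
Qed.
End interval_integrals.

Lemma uniform_prob_itv (R : realType) (a b c d : R) (ab : a < b) :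
  a <= c -> c <= d -> d <= b -> uniform_prob ab `[c, d] = ((d - c) / (b - a))%:E.
Proof.
move=> ac cd db; rewrite /uniform_prob.
rewrite (@eq_integral _ _ _ _ _ (fun=> (b - a)^-1%:E)); last first.
  move=> x; rewrite inE /= in_itv /= => /andP[cx xd].
  by rewrite /uniform_pdf (le_trans ac cx) (le_trans xd db).
rewrite integral_cst //= lebesgue_measure_itv /= lte_fin.
have [cd'|dc] := ltP c d; first by rewrite -EFinD -EFinM mulrC.
have -> : d = c by apply/le_anti/andP.
by rewrite subrr mul0r mule0.
Qed.

Section uniform_grid.
Variables (R : realType) (k : nat).
Hypothesis k_gt0 : (0 < k)%N.
Local Notation K := (k%:R : R).
Local Notation beta := (beta_k R k).
Local Notation mu := (@lebesgue_measure R).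

Let K_gt0 : 0 < K. Proof. by rewrite ltr0n. Qed.

Lemma mem_beta_k b : b \in beta <-> exists2 j, (0 < j <= k)%N & b = j%:R / K.
Proof.
split; first by move=> /imfsetP [j /=]; rewrite mem_iota add1n ltnS => ? ->; exists j.
by move=> [j jk ->]; apply/imfsetP; exists j; rewrite //= mem_iota add1n ltnS.
Qed.

Lemma card_beta_k : #|` beta| = k.
Proof.
rewrite card_imfset /=; first by rewrite undup_id ?iota_uniq // size_iota.
by move=> i j /= /(mulIf (invr_neq0 (lt0r_neq0 K_gt0))) /eqP; rewrite eqr_nat => /eqP.
Qed.

Definition cell_bound (m : nat) : R := (2 * m%:R + 1) / (2 * K).

Lemma cell_bound_ge0 m : 0 <= cell_bound m.
Proof. by rewrite divr_ge0 // ltW // mulr_gt0. Qed.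

Lemma cell_boundS m : cell_bound m <= cell_bound m.+1.
Proof. by rewrite ler_pM2r ?invr_gt0 ?mulr_gt0 // -natr1; lra. Qed.

Lemma voronoi_beta_k m x : (m < k)%N ->
  (m = 0%N \/ cell_bound m <= x) -> (m.+1 = k \/ x <= cell_bound m.+1) ->
  voronoi beta (m.+1%:R / K) x.
Proof.
move=> mk left_bound right_bound b /mem_beta_k [i /andP[i_gt0 ik] ->].
apply: ler_dist_bisector.
have -> : (m.+1%:R / K - i%:R / K) * (2 * x - i%:R / K - m.+1%:R / K) =
          (m.+1%:R - i%:R) * (2 * K * x - i%:R - m.+1%:R) / K ^+ 2.
  by field; rewrite lt0r_neq0.
rewrite divr_ge0 ?sqr_ge0 //.
have [im|mi] := leqP i m.
  case: left_bound => [m0|]; first by lia.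
  rewrite /cell_bound ler_pdivrMr ?mulr_gt0 // => /= left_bound.
  have : i%:R <= m%:R :> R by rewrite ler_nat.
  rewrite -natr1; nra.
have [->|i_neq] := eqVneq i m.+1; first by rewrite subrr mul0r.
case: right_bound => [mk'|]; first by lia.
rewrite /cell_bound ler_pdivlMr ?mulr_gt0 // => /= right_bound.
have : m.+2%:R <= i%:R :> R by rewrite ler_nat; lia.
rewrite -!natr1 in right_bound *; nra.
Qed.

Lemma integral_beta_k_cell m : (m.+1 < k)%N ->
  (\int[mu]_(x in `[cell_bound m, cell_bound m.+1]) mindist2 beta x =
   (1 / (12 * K ^+ 3))%:E)%E.
Proof.
move=> mk; rewrite (@integral_mindist2_voronoi _ _ (m.+1%:R / K)) ?cell_boundS //.
- by congr (_%:E); rewrite /cell_bound -!natr1; field; rewrite lt0r_neq0.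
- by apply/mem_beta_k; exists m.+1 => //; lia.
- move=> x /= /[!in_itv] /= /andP[lo hi].
  by apply: voronoi_beta_k; [exact: ltnW|right|right].
Qed.

Lemma integral_beta_k_prefix m : (m < k)%N ->
  (\int[mu]_(x in `[0%R, cell_bound m]) mindist2 beta x =
   ((2 * m%:R + 7) / (24 * K ^+ 3))%:E)%E.
Proof.
elim: m => [_|m IH mk].
  rewrite (@integral_mindist2_voronoi _ _ (1 / K)) ?cell_bound_ge0 //.
  - by congr (_%:E); rewrite /cell_bound; field; rewrite lt0r_neq0.
  - by apply/mem_beta_k; exists 1%N; rewrite ?k_gt0.
  - move=> x /= /[!in_itv] /= /andP[_ hi]; apply: (@voronoi_beta_k 0) => //; first by left.
    by right; apply: le_trans hi (cell_boundS 0).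
rewrite (@integral_itv_split _ _ 0 (cell_bound m)) ?cell_bound_ge0 ?cell_boundS //.
  rewrite IH ?(ltn_trans _ mk) // integral_beta_k_cell // -EFinD.
  by congr (_%:E); rewrite -natr1; field; rewrite lt0r_neq0.
by apply: measurable_funTS; exact: measurable_mindist2.
Qed.

Lemma integral_mindist2_beta_k :
  (\int[mu]_(x in `[0%R, 1%R]) mindist2 beta x = ((K + 3) / (12 * K ^+ 3))%:E)%E.
Proof.
have k1 : k = k.-1.+1 by rewrite prednK.
have last_bound : cell_bound k.-1 <= 1.
  by rewrite /cell_bound ler_pdivrMr ?mulr_gt0 // mul1r [in leRHS]k1 -natr1; lra.
rewrite (@integral_itv_split _ _ 0 (cell_bound k.-1)) ?cell_bound_ge0 //; last first.
  by apply: measurable_funTS; exact: measurable_mindist2.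
rewrite integral_beta_k_prefix ?prednK ?leqnn //.
rewrite (@integral_mindist2_voronoi _ _ (k.-1.+1%:R / K)) //.
- rewrite -EFinD; congr (_%:E); rewrite /cell_bound [in K]k1 -!natr1.
  by field; rewrite natr1 pnatr_eq0.
- by apply/mem_beta_k; exists k.-1.+1; rewrite -k1 ?k_gt0 ?leqnn.
- move=> x /= /[!in_itv] /= /andP[lo _].
  by apply: voronoi_beta_k; [rewrite -k1|right|left].
Qed.

Lemma distortion_beta_k : distortion (unif01 R) beta = ((K + 3) / (12 * K ^+ 3))%:E.
Proof.
rewrite /distortion integral_uniform //=.
- by rewrite subr0 invr1 mul1e integral_mindist2_beta_k.
- exact: measurable_mindist2.
- exact: mindist2_ge0.
Qed.

Let point_between_bounds m :
  cell_bound m < m.+1%:R / K /\ m.+1%:R / K <= cell_bound m.+1.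
Proof.
have e : m.+1%:R / K * (2 * K) = 2 * m.+1%:R by field; rewrite lt0r_neq0.
rewrite /cell_bound ltr_pdivrMr ?ler_pdivlMr ?mulr_gt0 // e -!natr1; split; lra.
Qed.

Lemma voronoi_beta_k_gt0 b : b \in beta -> (0 < unif01 R (voronoi beta b))%E.
Proof.
move=> /mem_beta_k [[|m] // /andP[_ mk] ->].
have [lo_lt_pt pt_le_hi] := point_between_bounds m.
have cell_sub : (`[cell_bound m, m.+1%:R / K] `<=` voronoi beta (m.+1%:R / K))%classic.
  move=> x /= /[!in_itv] /= /andP[lo hi].
  by apply: voronoi_beta_k => //; right => //; apply: le_trans hi pt_le_hi.
apply: lt_le_trans (le_measure (unif01 R) _ _ cell_sub); last 2 first.
- by rewrite inE; exact: measurable_itv.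
- by rewrite inE; exact: measurable_voronoi.
rewrite /unif01 /= uniform_prob_itv ?cell_bound_ge0 ?(ltW lo_lt_pt) //.
  by rewrite lte_fin subr0 divr1 subr_gt0.
by rewrite ler_pdivrMr // mul1r ler_nat.
Qed.

End uniform_grid.

Theorem proposition4p1 (R : realType) (k : nat) : (0 < k)%N ->
  (forall gamma : {fset R},
     cond_optimal_set (unif01 R) (beta_k R k) k gamma <-> gamma = beta_k R k)
  /\ cond_quant_error (unif01 R) (beta_k R k) k
     = ((k%:R + 3) / (12 * k%:R ^+ 3))%:E.
Proof.
move=> k_gt0; have card_beta := @card_beta_k R k k_gt0.
split; last by rewrite -{2}card_beta cond_quant_error_card distortion_beta_k.
move=> gamma; rewrite -{2}card_beta cond_optimal_set_card.
split=> [[] //|->]; split=> //; exact: voronoi_beta_k_gt0.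
Qed.
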